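(* Let $G$ be a group and $V$ a normal abelian subgroup of $G$. Suppose that every chain of nested subgroups $H_0<H_1<\dots<H_m$ in $G/V$ has length $m\leqslant l$. Then the $c$-dimension of $G$ is at most $2l$. If moreover $V$ is central in $G$, then the $c$-dimension of $G$ is at most $l$.
   Context: The $c$-dimension of a group $G$ is the maximal length $k$ of a chain of nested centralizers $C_G(Y_0)<C_G(Y_1)<\dots<C_G(Y_k)$ (strict inclusions) of subsets $Y_i\subseteq G$. The length of a chain of subgroups $H_0<\dots<H_m$ (strict inclusions) is $m$. *)

Set Implicit Arguments.

Record Group : Type := {
  carrier :> Type;
  gmul : carrier -> carrier -> carrier;
  gone : carrier;
  ginv : carrier -> carrier;
  gmulA : forall x y z, gmul x (gmul y z) = gmul (gmul x y) z;
  gmul1l : forall x, gmul gone x = x;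
  gmul1r : forall x, gmul x gone = x;
  gmulVl : forall x, gmul (ginv x) x = gone;
  gmulVr : forall x, gmul x (ginv x) = gone
}.

Section Defs.
Variable G : Group.

Definition subset (A B : G -> Prop) : Prop := forall x, A x -> B x.
Definition strict_subset (A B : G -> Prop) : Prop :=
  subset A B /\ ~ subset B A.

Definition is_subgroup (H : G -> Prop) : Prop :=
  H (gone G) /\
  (forall x y, H x -> H y -> H (gmul G x y)) /\
  (forall x, H x -> H (ginv G x)).

Definition is_normal (H : G -> Prop) : Prop :=
  forall h g, H h -> H (gmul G (ginv G g) (gmul G h g)).

Definition is_abelian (H : G -> Prop) : Prop :=
  forall x y, H x -> H y -> gmul G x y = gmul G y x.

Definition is_central (H : G -> Prop) : Prop :=
  forall h g, H h -> gmul G h g = gmul G g h.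

Definition centralizer (Y : G -> Prop) : G -> Prop :=
  fun g => forall y, Y y -> gmul G g y = gmul G y g.

Definition cdim_le (n : nat) : Prop :=
  forall (k : nat) (Y : nat -> G -> Prop),
    (forall i, i < k -> strict_subset (centralizer (Y i)) (centralizer (Y (S i)))) ->
    k <= n.

Definition subgroup_chains_le (l : nat) : Prop :=
  forall (m : nat) (H : nat -> G -> Prop),
    (forall i, i <= m -> is_subgroup (H i)) ->
    (forall i, i < m -> strict_subset (H i) (H (S i))) ->
    m <= l.
End Defs.

Definition is_hom {G Q : Group} (f : G -> Q) : Prop :=
  forall x y, f (gmul G x y) = gmul Q (f x) (f y).

(* pi : G -> Q presents Q as the quotient G/V: a surjective homomorphism
   with kernel exactly V. *)
Definition is_quotient_map {G Q : Group} (V : G -> Prop) (pi : G -> Q) : Prop :=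
  is_hom pi /\ (forall q : Q, exists g, pi g = q) /\
  (forall g, V g <-> pi g = gone Q).

(* For a centralizer C = C_G(Y) consider two subgroups of Q = G/V: the image of
   C, and the set of cosets whose elements centralize C ∩ V (well defined since V
   is abelian).  Along a chain of centralizers the first grows and the second
   shrinks, and each strict step changes one of them: if C_G(Y1) ⊆ C_G(Y2) have
   the same two subgroups, write x ∈ C_G(Y2) as c w with c ∈ C_G(Y1) and
   w ∈ V ∩ C_G(Y2); every y ∈ Y1 centralizes C_G(Y1) ∩ V, hence C_G(Y2) ∩ V,
   hence w, so x ∈ C_G(Y1).  The strict steps therefore split into a chain of
   subgroups of Q in each direction, so there are at most 2l of them.  When V is
   central the second subgroup is all of Q, so every step is strict in the image
   and there are at most l steps. *)

From Stdlib Require Import Classical Arith Lia Program.Basics.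

Set Implicit Arguments.
Unset Strict Implicit.

Declare Scope group_scope.
Notation "x * y" := (gmul _ x y) : group_scope.
Notation "x ^-1" := (ginv _ x) (at level 2, left associativity, format "x ^-1")
  : group_scope.

Section GroupFacts.
Local Open Scope group_scope.
Variable G : Group.

Lemma mul_inv_cancel_l (x y : G) : x * (x^-1 * y) = y.
Proof. now rewrite gmulA, gmulVr, gmul1l. Qed.

Lemma commute_inv (a b : G) : a * b = b * a -> a^-1 * b = b * a^-1.
Proof.
  intro Hab.
  rewrite <- (gmul1r G (a^-1 * b)), <- (gmulVr G a), gmulA, <- (gmulA G _ b a).
  now rewrite <- Hab, (gmulA G _ a b), gmulVl, gmul1l.
Qed.

Lemma commute_mul (a b v : G) : a * v = v * a -> b * v = v * b -> (a * b) * v = v * (a * b).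
Proof. intros Ha Hb. now rewrite <- gmulA, Hb, gmulA, Ha, <- gmulA. Qed.

Lemma centralizer_is_subgroup (Y : G -> Prop) : is_subgroup G (centralizer G Y).
Proof.
  split; [| split].
  - intros y _. now rewrite gmul1l, gmul1r.
  - intros x z Hx Hz y Hy. apply commute_mul; auto.
  - intros x Hx y Hy. apply commute_inv; auto.
Qed.

Lemma subset_refl (A : G -> Prop) : subset G A A.
Proof. now intros x. Qed.

Lemma subset_trans (A B C : G -> Prop) : subset G A B -> subset G B C -> subset G A C.
Proof. intros HAB HBC x Hx. exact (HBC x (HAB x Hx)). Qed.

Variables (Q : Group) (f : G -> Q).

Definition image (C : G -> Prop) : Q -> Prop := fun q => exists g, C g /\ f g = q.

Lemma image_mono (C D : G -> Prop) : subset G C D -> subset Q (image C) (image D).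
Proof. intros HCD _ [g [Hg <-]]. exists g. auto. Qed.

Hypothesis f_hom : is_hom f.

Lemma hom_one : f (gone G) = gone Q.
Proof.
  assert (Hidem : f (gone G) * f (gone G) = f (gone G)) by now rewrite <- f_hom, gmul1l.
  transitivity ((f (gone G))^-1 * (f (gone G) * f (gone G))).
  - now rewrite gmulA, gmulVl, gmul1l.
  - rewrite Hidem. apply gmulVl.
Qed.

Lemma hom_inv (x : G) : f x^-1 = (f x)^-1.
Proof.
  rewrite <- (gmul1r Q (f x^-1)), <- (gmulVr Q (f x)), gmulA, <- f_hom, gmulVl, hom_one.
  apply gmul1l.
Qed.

Lemma image_is_subgroup (C : G -> Prop) : is_subgroup G C -> is_subgroup Q (image C).
Proof.
  intros [C1 [Cmul Cinv]]. split; [| split].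
  - exists (gone G). split; [exact C1 | exact hom_one].
  - intros _ _ [g [Hg <-]] [h [Hh <-]]. exists (g * h). auto.
  - intros _ [g [Hg <-]]. exists g^-1. split; [auto | apply hom_inv].
Qed.
End GroupFacts.

Section StrictChains.
Variables (T : Type) (P : T -> Prop) (R : T -> T -> Prop).

Definition strictly (a b : T) : Prop := R a b /\ ~ R b a.

Definition strict_chain (m : nat) (H : nat -> T) : Prop :=
  (forall i, i <= m -> P (H i)) /\ (forall i, i < m -> strictly (H i) (H (S i))).

Hypothesis R_trans : forall a b c, R a b -> R b c -> R a c.

Lemma strictly_trans_l (a b c : T) : R a b -> strictly b c -> strictly a c.
Proof.
  intros Hab [Hbc Hcb]. split; [exact (R_trans Hab Hbc) |].
  intro Hca. exact (Hcb (R_trans Hca Hab)).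
Qed.

Lemma strict_chain_snoc (m : nat) (H : nat -> T) (a a' : T) :
  strict_chain m H -> R (H m) a -> strictly a a' -> P a' ->
  exists H', strict_chain (S m) H' /\ H' (S m) = a'.
Proof.
  intros [HP Hstrict] Hma Haa' Pa'.
  exists (fun i => if Nat.eqb i (S m) then a' else H i).
  rewrite Nat.eqb_refl. split; [split | reflexivity].
  - intros i Hi. destruct (Nat.eqb_spec i (S m)); [exact Pa' | apply HP; lia].
  - intros i Hi. destruct (Nat.eqb_spec i (S m)); [lia |].
    destruct (Nat.eqb_spec (S i) (S m)) as [Ei | Ei].
    + replace i with m by lia. exact (strictly_trans_l Hma Haa').
    + apply Hstrict. lia.
Qed.
End StrictChains.

Lemma strict_chain_rev (T : Type) (P : T -> Prop) (R : T -> T -> Prop) m H :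
  strict_chain P R m H -> strict_chain P (flip R) m (fun i => H (m - i)).
Proof.
  intros [HP Hstrict]. split.
  - intros i _. apply HP. lia.
  - intros i Hi. replace (m - i) with (S (m - S i)) by lia. apply Hstrict. lia.
Qed.

Section InterleavedChains.
Variables (T : Type) (P : T -> Prop) (R1 R2 : T -> T -> Prop).
Hypotheses (R1_refl : forall a, R1 a a) (R2_refl : forall a, R2 a a)
  (R1_trans : forall a b c, R1 a b -> R1 b c -> R1 a c)
  (R2_trans : forall a b c, R2 a b -> R2 b c -> R2 a c).

Lemma interleaved_strict_chains (k : nat) (A B : nat -> T) :
  (forall i, i <= k -> P (A i) /\ P (B i)) ->
  (forall i, i < k -> R1 (A i) (A (S i)) /\ R2 (B i) (B (S i))) ->
  (forall i, i < k -> strictly R1 (A i) (A (S i)) \/ strictly R2 (B i) (B (S i))) ->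
  exists a b HA HB, a + b = k /\
    strict_chain P R1 a HA /\ R1 (HA a) (A k) /\
    strict_chain P R2 b HB /\ R2 (HB b) (B k).
Proof.
  induction k as [| k IH]; intros HP Hmono Hstep.
  - exists 0, 0, (fun _ => A 0), (fun _ => B 0).
    split; [reflexivity |].
    split; [split; [intros; apply HP; lia | intros; lia] | split; [apply R1_refl |]].
    split; [split; [intros; apply HP; lia | intros; lia] | apply R2_refl].
  - destruct IH as (a & b & HA & HB & Hk & HAc & HAk & HBc & HBk);
      [intros; apply HP; lia | intros; apply Hmono; lia | intros; apply Hstep; lia |].
    destruct (Hmono k (Nat.lt_succ_diag_r k)) as [HAmono HBmono].
    destruct (classic (strictly R1 (A k) (A (S k)))) as [HAs | HAs].
    + destruct (strict_chain_snoc R1_trans HAc HAk HAs (proj1 (HP (S k) (le_n _))))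
        as (HA' & HA'c & HA'k).
      exists (S a), b, HA', HB. rewrite HA'k.
      refine (conj _ (conj HA'c (conj (R1_refl _) (conj HBc (R2_trans HBk HBmono))))). lia.
    + assert (HBs : strictly R2 (B k) (B (S k))).
      { destruct (Hstep k (Nat.lt_succ_diag_r k)); [contradiction | assumption]. }
      destruct (strict_chain_snoc R2_trans HBc HBk HBs (proj2 (HP (S k) (le_n _))))
        as (HB' & HB'c & HB'k).
      exists a, (S b), HA, HB'. rewrite HB'k.
      refine (conj _ (conj HAc (conj (R1_trans HAk HAmono) (conj HB'c (R2_refl _))))). lia.
Qed.
End InterleavedChains.

Section CentralizerChains.
Local Open Scope group_scope.
Variables (G : Group) (V : G -> Prop) (Q : Group) (pi : G -> Q).
Hypotheses (V_abelian : is_abelian G V) (pi_hom : is_hom pi)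
  (pi_surj : forall q, exists g, pi g = q) (pi_ker : forall g, V g <-> pi g = gone Q).

Definition centralizing_cosets (C : G -> Prop) : Q -> Prop :=
  fun q => forall g, pi g = q -> forall v, V v -> C v -> g * v = v * g.

Lemma kernel_of_same_image (g h : G) : pi g = pi h -> V (g^-1 * h).
Proof.
  intro E. apply pi_ker. rewrite pi_hom, (hom_inv pi_hom), E. apply gmulVl.
Qed.

(* Two lifts of a coset differ by an element of V, which commutes with V. *)
Lemma centralizing_cosets_lift (C : G -> Prop) (g : G) :
  (forall v, V v -> C v -> g * v = v * g) -> centralizing_cosets C (pi g).
Proof.
  intros Hg h Eh v Hv Cv. rewrite <- (mul_inv_cancel_l g h).
  apply commute_mul; [now apply Hg |].
  apply V_abelian; [| exact Hv]. apply kernel_of_same_image. now rewrite Eh.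
Qed.

Lemma centralizing_cosets_is_subgroup (C : G -> Prop) :
  is_subgroup Q (centralizing_cosets C).
Proof.
  split; [| split].
  - rewrite <- (hom_one pi_hom). apply centralizing_cosets_lift.
    intros v _ _. now rewrite gmul1l, gmul1r.
  - intros x y Hx Hy. destruct (pi_surj x) as [g <-], (pi_surj y) as [h <-].
    rewrite <- pi_hom. apply centralizing_cosets_lift.
    intros v Hv Cv. apply commute_mul; [apply Hx | apply Hy]; auto.
  - intros x Hx. destruct (pi_surj x) as [g <-].
    rewrite <- (hom_inv pi_hom). apply centralizing_cosets_lift.
    intros v Hv Cv. apply commute_inv, Hx; auto.
Qed.

Lemma centralizing_cosets_anti (C D : G -> Prop) :
  subset G C D -> subset Q (centralizing_cosets D) (centralizing_cosets C).
Proof. intros HCD q Hq g Eg v Hv Cv. apply Hq; auto. Qed.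

Lemma centralizing_cosets_central :
  is_central G V -> forall C q, centralizing_cosets C q.
Proof. intros Hcentral C q g _ v Hv _. symmetry. now apply Hcentral. Qed.

Lemma centralizer_subset_of_projections (Y1 Y2 : G -> Prop) :
  subset G (centralizer G Y1) (centralizer G Y2) ->
  subset Q (image pi (centralizer G Y2)) (image pi (centralizer G Y1)) ->
  subset Q (centralizing_cosets (centralizer G Y1))
    (centralizing_cosets (centralizer G Y2)) ->
  subset G (centralizer G Y2) (centralizer G Y1).
Proof.
  intros HC Himage Hcosets x Hx.
  destruct (Himage (pi x) (ex_intro _ x (conj Hx eq_refl))) as [c [Hc Ec]].
  destruct (centralizer_is_subgroup Y1) as [_ [Y1mul _]].
  destruct (centralizer_is_subgroup Y2) as [_ [Y2mul Y2inv]].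
  set (w := c^-1 * x).
  assert (Vw : V w) by now apply kernel_of_same_image.
  assert (Y2w : centralizer G Y2 w) by (apply Y2mul; [apply Y2inv, HC, Hc | exact Hx]).
  assert (Y1w : centralizer G Y1 w).
  { intros y Hy.
    assert (Hy_cosets : centralizing_cosets (centralizer G Y1) (pi y)).
    { apply centralizing_cosets_lift. intros v _ Cv. symmetry. now apply Cv. }
    symmetry. exact (Hcosets _ Hy_cosets y eq_refl w Vw Y2w). }
  replace x with (c * w) by apply mul_inv_cancel_l.
  now apply Y1mul.
Qed.

Lemma centralizer_step (Y1 Y2 : G -> Prop) :
  strict_subset G (centralizer G Y1) (centralizer G Y2) ->
  strict_subset Q (image pi (centralizer G Y1)) (image pi (centralizer G Y2)) \/
  strict_subset Q (centralizing_cosets (centralizer G Y2))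
    (centralizing_cosets (centralizer G Y1)).
Proof.
  intros [HC HnC].
  destruct (classic (subset Q (image pi (centralizer G Y2)) (image pi (centralizer G Y1))))
    as [Himage | Himage]; [| left; split; [now apply image_mono | exact Himage]].
  destruct (classic (subset Q (centralizing_cosets (centralizer G Y1))
                       (centralizing_cosets (centralizer G Y2))))
    as [Hcosets | Hcosets]; [| right; split; [now apply centralizing_cosets_anti | exact Hcosets]].
  exfalso. exact (HnC (centralizer_subset_of_projections HC Himage Hcosets)).
Qed.
End CentralizerChains.

Theorem lemma2 (G : Group) (V : G -> Prop) (Q : Group) (pi : G -> Q) (l : nat) :
  is_subgroup G V -> is_normal G V -> is_abelian G V ->
  is_quotient_map V pi ->
  subgroup_chains_le Q l ->
  cdim_le G (2 * l) /\ (is_central G V -> cdim_le G l).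
Proof.
  (* V is the kernel of pi, so being a normal subgroup comes for free. *)
  intros _ _ V_abelian [pi_hom [pi_surj pi_ker]] Hl.
  split.
  - intros k Y Hchain.
    destruct (interleaved_strict_chains (P := is_subgroup Q)
                (R1 := subset Q) (R2 := flip (subset Q))
                (@subset_refl Q) (@subset_refl Q) (@subset_trans Q)
                (fun A B D HAB HBD => subset_trans HBD HAB)
                (k := k) (A := fun i => image pi (centralizer G (Y i)))
                (B := fun i => centralizing_cosets V pi (centralizer G (Y i))))
      as (a & b & HA & HB & Hk & [HA_sub HA_strict] & _ & HB_chain & _).
    + intros i _. split; [apply (image_is_subgroup pi_hom), centralizer_is_subgroup |].
      now apply centralizing_cosets_is_subgroup.
    + intros i Hi. split; [apply image_mono | apply centralizing_cosets_anti]; apply Hchain, Hi.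
    + intros i Hi. exact (centralizer_step V_abelian pi_hom pi_ker (Hchain i Hi)).
    + destruct (strict_chain_rev HB_chain) as [HB_sub HB_strict].
      pose proof (Hl a HA HA_sub HA_strict).
      pose proof (Hl b _ HB_sub HB_strict). lia.
  - intros Hcentral k Y Hchain.
    apply (Hl k (fun i => image pi (centralizer G (Y i)))).
    + intros i _. apply (image_is_subgroup pi_hom), centralizer_is_subgroup.
    + intros i Hi.
      destruct (centralizer_step V_abelian pi_hom pi_ker (Hchain i Hi)) as [Hs | [_ Hs]];
        [exact Hs |].
      exfalso. apply Hs. intros q _. now apply centralizing_cosets_central.
Qed.
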